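(* Let $X\subset\mathbb{R}^n$ be a finite set of points, let $\mathcal{O}\subset\mathcal{T}_n$ be an order ideal, and let $G\subset\mathbb{R}[x_1,\ldots,x_n]$ be an $\mathcal{O}$-border basis of the vanishing ideal $\mathcal{I}(X)=\{g\in\mathbb{R}[x_1,\ldots,x_n]: g(\mathbf{x})=0\ \forall \mathbf{x}\in X\}$. Then: (1) every $o\in\mathcal{O}\setminus\{1\}$ satisfies $\|o\|_{\mathrm{gw},X}\neq 0$; (2) every border term $b\in\partial\mathcal{O}$ satisfies $\|b\|_{\mathrm{gw},X}\neq 0$; (3) every $g\in G$ satisfies $\|g\|_{\mathrm{gw},X}\neq 0$.
   Context: $\mathcal{T}_n$ is the set of terms of $\mathbb{R}[x_1,\ldots,x_n]$. An order ideal is a finite $\mathcal{O}\subset\mathcal{T}_n$ closed under taking divisors; its border is $\partial\mathcal{O}=(\bigcup_k x_k\mathcal{O})\setminus\mathcal{O}$. An $\mathcal{O}$-border prebasis is a set of polynomials of the form $b-\sum_{o\in\mathcal{O}}c_o o$ with $b\in\partial\mathcal{O}$, $c_o\in\mathbb{R}$ (one for each $b$); it is an $\mathcal{O}$-border basis of an ideal $I$ if it lies in $I$ and $\mathcal{O}$ is a basis of the $\mathbb{R}$-vector space $\mathbb{R}[x_1,\ldots,x_n]/I$. For $X=\{\mathbf{x}_1,\ldots,\mathbf{x}_N\}$, the gradient norm of a polynomial $g$ is $\|g\|_{g,X}=\sqrt{\sum_{\mathbf{x}\in X}\|\nabla g(\mathbf{x})\|^2}/Z$ with $Z=\sqrt{\sum_{k=1}^n\deg_k(g)^2}$,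 and $\|g\|_{g,X}:=0$ if $g$ is constant. For $g=\sum_i c_it_i$ ($c_i\in\mathbb{R}$, distinct terms $t_i$), the gradient-weighted norm is $\|g\|_{\mathrm{gw},X}=\sqrt{\sum_i c_i^2\|t_i\|_{g,X}^2}$. *)

From HB Require Import structures.
From mathcomp Require Import all_boot all_order all_algebra.
From mathcomp Require Import Rstruct.
From mathcomp Require Import mpoly.
Set Implicit Arguments. Unset Strict Implicit. Unset Printing Implicit Defensive.
Import Order.TTheory GRing.Theory Num.Theory.
Local Open Scope ring_scope.

Notation RR := Rdefinitions.R.

(* Terms of R[x_1..x_n] are identified with their exponent vectors
   m : 'X_{1..n}; the term itself is the polynomial 'X_[m]. *)

Definition order_ideal (n : nat) (O : seq 'X_{1..n}) : Prop :=
  forall o t : 'X_{1..n}, o \in O -> (t <= o)%MM -> t \in O.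

Definition in_border (n : nat) (O : seq 'X_{1..n}) (b : 'X_{1..n}) : Prop :=
  b \notin O /\ exists (k : 'I_n) (o : 'X_{1..n}), o \in O /\ b = (o + U_(k))%MM.

Definition evalpt (n : nat) (x : 'rV[RR]_n) (g : {mpoly RR[n]}) : RR :=
  g.@[fun i => x ord0 i].

Definition vanishing (n : nat) (X : seq 'rV[RR]_n) (g : {mpoly RR[n]}) : Prop :=
  forall x, x \in X -> evalpt x g = 0.

(* An O-border prebasis, given as a family indexed by the border terms:
   for each border term b, g b = b - sum_{o in O} c_o o. *)
Definition border_prebasis (n : nat) (O : seq 'X_{1..n})
    (g : 'X_{1..n} -> {mpoly RR[n]}) : Prop :=
  forall b, in_border O b ->
    exists c : 'X_{1..n} -> RR, g b = 'X_[b] - \sum_(o <- O) c o *: 'X_[o].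

Definition quotient_basis (n : nat) (I : {mpoly RR[n]} -> Prop)
    (O : seq 'X_{1..n}) : Prop :=
  (forall p : {mpoly RR[n]}, exists c : 'X_{1..n} -> RR,
      I (p - \sum_(o <- O) c o *: 'X_[o])) /\
  (forall c : 'X_{1..n} -> RR, I (\sum_(o <- O) c o *: 'X_[o]) ->
      forall o, o \in O -> c o = 0).

Definition border_basis_of_vanishing (n : nat) (X : seq 'rV[RR]_n)
    (O : seq 'X_{1..n}) (g : 'X_{1..n} -> {mpoly RR[n]}) : Prop :=
  border_prebasis O g /\
  (forall b, in_border O b -> vanishing X (g b)) /\
  quotient_basis (vanishing X) O.

Definition degk (n : nat) (k : 'I_n) (g : {mpoly RR[n]}) : nat :=
  \max_(m <- msupp g) m k.

Definition is_constant (n : nat) (g : {mpoly RR[n]}) : bool :=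
  g == (g@_0%MM)%:MP.

Definition grad_norm (n : nat) (X : seq 'rV[RR]_n) (g : {mpoly RR[n]}) : RR :=
  if is_constant g then 0 else
  Num.sqrt (\sum_(x <- X) \sum_(k < n) (evalpt x (g^`M(k))) ^+ 2)
  / Num.sqrt (\sum_(k < n) ((degk k g)%:R) ^+ 2).

Definition gw_norm (n : nat) (X : seq 'rV[RR]_n) (g : {mpoly RR[n]}) : RR :=
  Num.sqrt (\sum_(m <- msupp g) (g@_m) ^+ 2 * (grad_norm X 'X_[m]) ^+ 2).

From HB Require Import structures.
From mathcomp Require Import all_boot all_order all_algebra.
From mathcomp Require Import Rstruct.
From mathcomp Require Import mpoly.
Set Implicit Arguments. Unset Strict Implicit. Unset Printing Implicit Defensive.
Import Order.TTheory GRing.Theory Num.Theory.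
Local Open Scope ring_scope.

(* Since O is linearly independent modulo I(X), no term of O vanishes on all
   of X.  Hence for t in O the term t x_k, whose k-th partial derivative is
   (t_k + 1) t, has positive gradient norm.  The nonconstant terms of O and
   the border terms are all of this form (O being closed under divisors), and
   G b has coefficient 1 at b, so each of the three gradient-weighted norms
   has a positive summand. *)

Lemma psumr_gt0 (R : numDomainType) (I : eqType) (r : seq I) (F : I -> R) :
  (forall i, 0 <= F i) -> has (fun i => 0 < F i) r -> 0 < \sum_(i <- r) F i.
Proof. by move=> F_ge0 hasF; rewrite lt_def sumr_ge0 // andbT psumr_neq0. Qed.

Lemma mpolyX_neq0 n (R : nzRingType) (m : 'X_{1..n}) : 'X_[m] != 0 :> {mpoly R[n]}.
Proof. by rewrite -msupp_eq0 msuppX. Qed.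

Lemma mcoeff_sum_mpolyX_notin n (R : nzRingType) (O : seq 'X_{1..n})
    (c : 'X_{1..n} -> R) (b : 'X_{1..n}) :
  b \notin O -> (\sum_(o <- O) c o *: 'X_[o] : {mpoly R[n]})@_b = 0.
Proof.
move=> bO; rewrite raddf_sum /= big_seq big1 // => o oO.
rewrite mcoeffZ mcoeffX; case: eqP => [ob|_]; last by rewrite mulr0.
by rewrite -ob oO in bO.
Qed.

Lemma border_prebasis_mcoeff n (O : seq 'X_{1..n}) (G : 'X_{1..n} -> {mpoly RR[n]})
    (b : 'X_{1..n}) :
  border_prebasis O G -> in_border O b -> (G b)@_b = 1.
Proof.
move=> preG bB; have [c ->] := preG b bB; case: bB => bO _.
by rewrite mcoeffB mcoeffX eqxx mcoeff_sum_mpolyX_notin // subr0.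
Qed.

Lemma quotient_basis_mpolyX n (I : {mpoly RR[n]} -> Prop) (O : seq 'X_{1..n})
    (m : 'X_{1..n}) :
  quotient_basis I O -> uniq O -> m \in O -> ~ I 'X_[m].
Proof.
move=> [_ O_indep] uO mO Im.
pose c o : RR := (o == m)%:R.
have sum_c : \sum_(o <- O) c o *: 'X_[o] = 'X_[m].
  rewrite (bigD1_seq m) //= /c eqxx scale1r big1 ?addr0 // => o /negbTE ->.
  by rewrite scale0r.
have := O_indep c; rewrite sum_c => /(_ Im m mO).
by rewrite /c eqxx; apply/eqP; rewrite oner_eq0.
Qed.

Lemma not_vanishing_witness n (X : seq 'rV[RR]_n) (p : {mpoly RR[n]}) :
  ~ vanishing X p -> exists2 x, x \in X & evalpt x p != 0.
Proof.
move=> not_van; apply/hasP/negPn/negP => /hasPn p_van.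
by apply: not_van => x /p_van; rewrite negbK => /eqP.
Qed.

Lemma is_constant_mpolyX n (m : 'X_{1..n}) : is_constant 'X_[m] = (m == 0%MM).
Proof.
rewrite /is_constant mcoeffX; have [->|_] := eqVneq m 0%MM.
  by rewrite mpolyX0 mpolyC1 eqxx.
by rewrite mpolyC0 (negbTE (mpolyX_neq0 _ _)).
Qed.

Lemma degk_mpolyX n (k : 'I_n) (m : 'X_{1..n}) : degk k 'X_[m] = m k.
Proof. by rewrite /degk msuppX big_seq1. Qed.

Lemma grad_norm_mpolyXU_gt0 n (X : seq 'rV[RR]_n) (t : 'X_{1..n}) (k : 'I_n) x :
  x \in X -> evalpt x 'X_[t] != 0 -> 0 < grad_norm X 'X_[t + U_(k)].
Proof.
move=> xX tx_neq0.
have tUk_gt0 : (0 < (t + U_(k))%MM k)%N by rewrite mnmDE mnm1E eqxx addn1.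
have tUk_neq0 : (t + U_(k))%MM != 0%MM.
  by apply: contraTneq tUk_gt0 => ->; rewrite mnm0E.
rewrite /grad_norm is_constant_mpolyX (negbTE tUk_neq0).
apply: divr_gt0; rewrite sqrtr_gt0; apply: psumr_gt0.
- by move=> y; apply: sumr_ge0 => i _; apply: sqr_ge0.
- apply/hasP; exists x => //; apply: psumr_gt0 => [i|]; first exact: sqr_ge0.
  apply/hasP; exists k; first exact: mem_index_enum.
  rewrite exprn_even_gt0 // /evalpt mderivX addmK mevalZ mulf_neq0 //.
  by rewrite pnatr_eq0 -lt0n.
- by move=> i; apply: sqr_ge0.
- apply/hasP; exists k; first exact: mem_index_enum.
  by rewrite degk_mpolyX exprn_even_gt0 // pnatr_eq0 -lt0n.
Qed.

Lemma grad_norm_quotient_basisU_gt0 n (X : seq 'rV[RR]_n) (O : seq 'X_{1..n})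
    (t : 'X_{1..n}) (k : 'I_n) :
  quotient_basis (vanishing X) O -> uniq O -> t \in O ->
  0 < grad_norm X 'X_[t + U_(k)].
Proof.
move=> qbO uO tO.
have [x xX tx_neq0] := not_vanishing_witness (quotient_basis_mpolyX qbO uO tO).
exact: grad_norm_mpolyXU_gt0 xX tx_neq0.
Qed.

Lemma gw_norm_neq0 n (X : seq 'rV[RR]_n) (p : {mpoly RR[n]}) (m : 'X_{1..n}) :
  p@_m != 0 -> 0 < grad_norm X 'X_[m] -> gw_norm X p != 0.
Proof.
move=> pm_neq0 grad_gt0; rewrite /gw_norm sqrtr_eq0 -ltNge.
apply: psumr_gt0 => [m'|]; first by rewrite mulr_ge0 ?sqr_ge0.
apply/hasP; exists m; first by rewrite mcoeff_msupp.
by apply: mulr_gt0; [rewrite exprn_even_gt0 | exact: exprn_gt0].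
Qed.

Lemma mnm_neq0_lep1m n (m : 'X_{1..n}) : m != 0%MM -> exists k, (U_(k) <= m)%MM.
Proof.
move=> m_neq0; apply/existsP; apply: contraR m_neq0 => /existsPn no_k.
by apply/eqP/mnmP => i; rewrite mnm0E; apply/eqP; move: (no_k i); rewrite lep1mP negbK.
Qed.

Theorem mainTheorem2 (n : nat) (X : seq 'rV[RR]_n) (O : seq 'X_{1..n})
    (G : 'X_{1..n} -> {mpoly RR[n]}) :
  uniq X -> uniq O -> order_ideal O ->
  border_basis_of_vanishing X O G ->
  (forall o, o \in O -> o != 0%MM -> gw_norm X 'X_[o] != 0) /\
  (forall b, in_border O b -> gw_norm X 'X_[b] != 0) /\
  (forall b, in_border O b -> gw_norm X (G b) != 0).
Proof.
move=> _ uO idealO [preG [_ qbO]].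
have grad_border_gt0 b : in_border O b -> 0 < grad_norm X 'X_[b].
  by move=> [_ [k [o [oO ->]]]]; exact: grad_norm_quotient_basisU_gt0 qbO uO oO.
have mcoeffXX m : ('X_[m] : {mpoly RR[n]})@_m != 0 by rewrite mcoeffX eqxx oner_eq0.
split; [|split] => [o oO o_neq0 | b bB | b bB].
- have [k Uk_le_o] := mnm_neq0_lep1m o_neq0.
  have o_pred_in : (o - U_(k))%MM \in O := idealO _ _ oO (lem_subr o U_(k)).
  apply: (gw_norm_neq0 (mcoeffXX o)); rewrite -(submK Uk_le_o).
  exact: grad_norm_quotient_basisU_gt0 qbO uO o_pred_in.
- exact: gw_norm_neq0 (mcoeffXX b) (grad_border_gt0 b bB).
- apply: gw_norm_neq0 (grad_border_gt0 b bB).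
  by rewrite (border_prebasis_mcoeff preG bB) oner_eq0.
Qed.
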